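(* Let $p\ge 1$, $N\ge 1$, let $x_1,\dots,x_N\in\mathbb{R}^p$ be arbitrary, and let $w_1,\dots,w_N>0$ be fixed weights. Let $f:\mathbb{R}^p\to[0,1]$ be PDD. Define the blurring mean-shift iteration by $x_i^{(0)}=x_i$ and $$x_i^{(t+1)}=\frac{\sum_{j=1}^N f(x_i^{(t)}-x_j^{(t)})\,w_j\,x_j^{(t)}}{\sum_{j=1}^N f(x_i^{(t)}-x_j^{(t)})\,w_j},\qquad i=1,\dots,N,\ t\ge 0.$$ Then there exist points $x_1^*,\dots,x_N^*\in\mathbb{R}^p$ such that $\lim_{t\to\infty}x_i^{(t)}=x_i^*$ for every $i=1,\dots,N$.
   Context: A function $f:\mathbb{R}^p\to[0,1]$ is called PDD (positive and decreasing with respect to distance) if: (i) $0\le f(u)\le 1$ for all $u$, and $f(u)=1$ if and only if $u=0$; (ii) $f(u)$ depends only on $\|u\|$, i.e. $f(u)=\varphi(\|u\|)$ for some function $\varphi:[0,\infty)\to[0,1]$; (iii) $\varphi$ is decreasing (non-increasing) in $\|u\|$. The denominators in the iteration are positive since $f(0)=1$ and $w_i>0$. *)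

From Stdlib Require Import Reals.
Open Scope R_scope.

(* A point of R^p is represented as a function nat -> R; only the
   coordinates 0..p-1 are meaningful. *)
Definition vec := nat -> R.

Fixpoint sumN (n : nat) (g : nat -> R) : R :=
  match n with
  | O => 0
  | S m => sumN m g + g m
  end.

Definition vsub (u v : vec) : vec := fun k => u k - v k.

Definition norm (p : nat) (u : vec) : R := sqrt (sumN p (fun k => u k ^ 2)).

Definition is_zero (p : nat) (u : vec) : Prop := forall k, (k < p)%nat -> u k = 0.

Definition PDD (p : nat) (f : vec -> R) : Prop :=
  (forall u, 0 <= f u <= 1) /\
  (forall u, f u = 1 <-> is_zero p u) /\
  exists phi : R -> R,
    (forall u, f u = phi (norm p u)) /\
    (forall a b, 0 <= a -> a <= b -> phi b <= phi a).

Definition bms_step (N : nat) (f : vec -> R) (w : nat -> R) (X : nat -> vec)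
  : nat -> vec :=
  fun i k =>
    sumN N (fun j => f (vsub (X i) (X j)) * w j * X j k) /
    sumN N (fun j => f (vsub (X i) (X j)) * w j).

Fixpoint bms (N : nat) (f : vec -> R) (w : nat -> R) (x : nat -> vec) (t : nat)
  : nat -> vec :=
  match t with
  | O => x
  | S t' => bms_step N f w (bms N f w x t')
  end.

(* Fix a coordinate k.  One step replaces y_i = x_i[k] by sum_j A_ij y_j with
   A_ij = f(x_i - x_j) w_j / D_i, where D_i normalizes row i.  Since f(0) = 1,
   0 <= f <= 1 and f is symmetric, A is row stochastic, its diagonal is at
   least c = lo / W (lo a lower bound of the weights, W their sum), and it is
   cut-balanced: A_ij <= K A_ji with K = (W / lo)^2, uniformly in time.

   For averaging dynamics with these properties, the potential
   Phi(y) = sum_k b^k y_(k), where y_(0) >= y_(1) >= ... is the sorted profile,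
   is bounded below and drops at every step by at least d |y_i(t+1) - y_i(t)|
   for suitable b, d > 0.  Summation by parts reduces this to one estimate for
   each threshold M, comparing the flows out of and into the M largest values
   (cut_estimate).  Each coordinate therefore has bounded total variation and
   converges, and coordinatewise convergence is convergence in R^p. *)

From Stdlib Require Import Reals Lra Lia ClassicalEpsilon.
Open Scope R_scope.

Lemma sumN_ext (n : nat) (g h : nat -> R) :
  (forall k, (k < n)%nat -> g k = h k) -> sumN n g = sumN n h.
Proof.
  induction n as [|n IH]; intros Hgh; simpl; [reflexivity|].
  rewrite IH by (intros; apply Hgh; lia).
  rewrite Hgh by lia; reflexivity.
Qed.

Lemma sumN_ge0 (n : nat) (g : nat -> R) :
  (forall k, (k < n)%nat -> 0 <= g k) -> 0 <= sumN n g.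
Proof.
  induction n as [|n IH]; intros Hg; simpl; [lra|].
  assert (0 <= sumN n g) by (apply IH; intros; apply Hg; lia).
  assert (0 <= g n) by (apply Hg; lia).
  lra.
Qed.

Lemma sumN_le (n : nat) (g : nat -> R) (e : R) :
  (forall k, (k < n)%nat -> g k <= e) -> sumN n g <= INR n * e.
Proof.
  induction n as [|n IH]; intros Hg; simpl sumN; [simpl; lra|].
  rewrite S_INR.
  assert (sumN n g <= INR n * e) by (apply IH; intros; apply Hg; lia).
  assert (g n <= e) by (apply Hg; lia).
  lra.
Qed.

Lemma cv_of_bounded_variation (u : nat -> R) (B : R) :
  (forall T, sumN T (fun t => Rabs (u (S t) - u t)) <= B) -> exists l, Un_cv u l.
Proof.
  intros HB.
  set (V := fun T => sumN T (fun t => Rabs (u (S t) - u t))).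
  assert (V_cauchy : Cauchy_crit V).
  { apply CV_Cauchy, growing_cv.
    - intro T; unfold V; simpl; pose proof (Rabs_pos (u (S T) - u T)); lra.
    - exists B; intros v [T ->]; apply HB. }
  assert (incr_le : forall m k, Rabs (u (m + k)%nat - u m) <= V (m + k)%nat - V m).
  { intros m k; induction k as [|k IH].
    - rewrite Nat.add_0_r, Rminus_diag, Rabs_R0; lra.
    - replace (m + S k)%nat with (S (m + k)) by lia.
      unfold V at 1; simpl sumN; fold (V (m + k)%nat).
      pose proof (Rabs_triang (u (S (m + k)) - u (m + k)%nat) (u (m + k)%nat - u m)) as Htr.
      replace (u (S (m + k)) - u (m + k)%nat + (u (m + k)%nat - u m))
        with (u (S (m + k)) - u m) in Htr by ring.
      lra. }
  assert (u_cauchy : Cauchy_crit u).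
  { intros eps Heps; destruct (V_cauchy eps Heps) as [T HT]; exists T.
    assert (ordered : forall a c, (T <= a)%nat -> (a <= c)%nat -> Rabs (u c - u a) < eps).
    { intros a c Ha Hac.
      pose proof (HT (a + (c - a))%nat a ltac:(lia) Ha) as HV; unfold Rdist in HV.
      pose proof (incr_le a (c - a)%nat).
      pose proof (Rle_abs (V (a + (c - a))%nat - V a)).
      replace c with (a + (c - a))%nat by lia; lra. }
    intros m m' Hm Hm'; unfold Rdist.
    destruct (Nat.le_ge_cases m m').
    - rewrite Rabs_minus_sym; apply ordered; lia.
    - apply ordered; lia. }
  destruct (R_complete u u_cauchy) as [l Hl]; exists l; exact Hl.
Qed.

Lemma eventually_forall_lt (P : nat -> nat -> Prop) (p : nat) :
  (forall k, (k < p)%nat -> exists T, forall t, (T <= t)%nat -> P k t) ->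
  exists T, forall t, (T <= t)%nat -> forall k, (k < p)%nat -> P k t.
Proof.
  induction p as [|p IH]; intros HP.
  - exists 0%nat; intros; lia.
  - destruct IH as [T1 H1]; [intros k Hk; apply HP; lia|].
    destruct (HP p ltac:(lia)) as [T2 H2].
    exists (Nat.max T1 T2); intros t Ht k Hk.
    destruct (Nat.eq_dec k p) as [->|ne]; [apply H2 | apply H1]; lia.
Qed.

Lemma norm_cv_of_coord_cv (p : nat) (X : nat -> vec) (l : vec) :
  (forall k, (k < p)%nat -> Un_cv (fun t => X t k) (l k)) ->
  forall eps, 0 < eps -> exists T, forall t, (T <= t)%nat -> norm p (vsub (X t) l) < eps.
Proof.
  intros Hcv eps Heps.
  pose proof (pos_INR p) as Hp.
  set (dl := eps / (INR p + 1)).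
  assert (dl_pos : 0 < dl) by (unfold dl; apply Rdiv_lt_0_compat; lra).
  assert (dlE : dl * (INR p + 1) = eps) by (unfold dl; field; lra).
  destruct (eventually_forall_lt (fun k t => Rabs (X t k - l k) < dl) p) as [T HT].
  { intros k Hk; destruct (Hcv k Hk dl dl_pos) as [T HT].
    exists T; intros t Ht; apply HT; lia. }
  exists T; intros t Ht; unfold norm.
  rewrite <- (sqrt_pow2 eps) by lra.
  apply sqrt_lt_1_alt; split.
  - apply sumN_ge0; intros; apply pow2_ge_0.
  - apply Rle_lt_trans with (INR p * (dl * dl)).
    + apply sumN_le; intros k Hk; unfold vsub.
      pose proof (HT t Ht k Hk) as Hk'; pose proof (Rabs_pos (X t k - l k)).
      rewrite <- (pow2_abs (X t k - l k)); nra.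
    + rewrite <- dlE; nra.
Qed.

Lemma choose_limits (N : nat) (X : nat -> nat -> vec) :
  (forall i k, (i < N)%nat -> exists l, Un_cv (fun t => X t i k) l) ->
  exists xstar : nat -> vec,
    forall i k, (i < N)%nat -> Un_cv (fun t => X t i k) (xstar i k).
Proof.
  intros Hcv.
  assert (Hex : forall i k, exists l, (i < N)%nat -> Un_cv (fun t => X t i k) l).
  { intros i k; destruct (Compare_dec.lt_dec i N) as [lt|nlt].
    - destruct (Hcv i k lt) as [l Hl]; exists l; intros; exact Hl.
    - exists 0; intros; contradiction. }
  exists (fun i k => proj1_sig (constructive_indefinite_description _ (Hex i k))).
  intros i k Hi.
  destruct (constructive_indefinite_description _ (Hex i k)) as [l Hl]; exact (Hl Hi).
Qed.

Lemma PDD_self (p : nat) (f : vec -> R) : PDD p f -> forall a, f (vsub a a) = 1.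
Proof.
  intros [_ [Hone _]] a; apply Hone; intros k _; unfold vsub; ring.
Qed.

Lemma PDD_sym (p : nat) (f : vec -> R) :
  PDD p f -> forall a b, f (vsub a b) = f (vsub b a).
Proof.
  intros [_ [_ [phi [Hphi _]]]] a b; rewrite !Hphi; unfold norm.
  f_equal; f_equal; apply sumN_ext; intros k _; unfold vsub; ring.
Qed.

Lemma pos_lower_bound (N : nat) (w : nat -> R) :
  (forall i, (i < N)%nat -> 0 < w i) ->
  exists lo, 0 < lo /\ forall i, (i < N)%nat -> lo <= w i.
Proof.
  induction N as [|N IH]; intros Hw.
  - exists 1; split; [lra | intros; lia].
  - destruct IH as [lo [lo_pos Hlo]]; [intros; apply Hw; lia|].
    exists (Rmin lo (w N)); split.
    + apply Rmin_pos; [exact lo_pos | apply Hw; lia].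
    + intros i Hi; destruct (Nat.eq_dec i N) as [->|ne].
      * apply Rmin_r.
      * eapply Rle_trans; [apply Rmin_l | apply Hlo; lia].
Qed.

From HB Require Import structures.
From mathcomp Require Import ssreflect ssrfun ssrbool eqtype ssrnat seq path.
From mathcomp Require Import choice fintype tuple finfun bigop finset fingroup perm.
From mathcomp Require Import order ssralg ssrnum ring lra Rstruct.
Set Implicit Arguments. Unset Strict Implicit. Unset Printing Implicit Defensive.
Import Order.TTheory GRing.Theory Num.Theory.
Local Open Scope ring_scope.

Lemma abel_summation (R : realFieldType) (c y : nat -> R) (n : nat) :
  \sum_(j < n.+1) c j * y j =
  (\sum_(j < n.+1) c j) * y n + \sum_(m < n) (y m - y m.+1) * \sum_(j < m.+1) c j.
Proof.
elim: n => [|n IH]; first by rewrite !big_ord1 big_ord0 addr0.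
rewrite big_ord_recr [in RHS]big_ord_recr [X in _ = _ + X]big_ord_recr /= IH.
set S := \sum_(i < n) _; set C := \sum_(i < n.+1) _.
rewrite mulrDl mulrBl; lra.
Qed.

Lemma sum_unit_interval_le (R : realFieldType) (n : nat) (P : pred 'I_n) (F : 'I_n -> R) :
  (forall i, P i -> 0 <= F i <= 1) -> \sum_(i < n | P i) F i <= n%:R.
Proof.
move=> F01; rewrite big_mkcond /=.
apply: le_trans (_ : \sum_(i < n) (1 : R) <= _); last by rewrite sumr_const card_ord.
by apply: ler_sum => i _; case: ifP => // /F01 /andP[].
Qed.

Lemma ler_term_sum (R : realFieldType) (n : nat) (P : pred 'I_n) (F : 'I_n -> R)
    (i : 'I_n) :
  (forall j, P j -> 0 <= F j) -> P i -> F i <= \sum_(j < n | P j) F j.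
Proof.
move=> F_ge0 Pi; rewrite (bigD1 i) //= lerDl.
by apply: sumr_ge0 => j /andP[/F_ge0].
Qed.

Lemma ler_term_sum_nat (R : realFieldType) (n : nat) (F : nat -> R) (i : nat) :
  (i < n)%N -> (forall j, (j < n)%N -> 0 <= F j) -> F i <= \sum_(j < n) F j.
Proof.
move=> iN F_ge0.
have := ler_term_sum (P := xpredT) (F := fun j : 'I_n => F j) (i := Ordinal iN).
by apply=> // j _; exact: F_ge0.
Qed.

Lemma sum_delta_mul (R : realFieldType) (F : nat -> R) (i n : nat) :
  \sum_(j < n) (if (j : nat) == i then 1 else 0) * F j = if (i < n)%N then F i else 0.
Proof.
elim: n => [|n IH]; first by rewrite big_ord0 ltn0.
rewrite big_ord_recr /= IH.
case: (ltngtP i n) => [lt_in|lt_ni|<-].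
- by rewrite (leqW lt_in) mul0r addr0.
- by rewrite ltnNge lt_ni mul0r addr0.
- by rewrite ltnSn mul1r add0r.
Qed.

Lemma sum_delta (R : realFieldType) (i n : nat) :
  \sum_(j < n) (if (j : nat) == i then 1 else 0) = (if (i < n)%N then 1 else 0 : R).
Proof.
by rewrite -(sum_delta_mul (fun=> 1)); apply: eq_bigr => j _; rewrite mulr1.
Qed.

Lemma sorted_gap_ge0 (R : realFieldType) (n' : nat) (y : nat -> R) (m : 'I_n') :
  (forall k l, (k <= l)%N -> (l < n'.+1)%N -> y l <= y k) -> 0 <= y m - y m.+1.
Proof. by move=> y_dec; rewrite subr_ge0; apply: y_dec; rewrite ?leqnSn ?ltnS. Qed.

Lemma exists_sorting_perm (R : realFieldType) (n : nat) (y : nat -> R) :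
  exists s : {perm 'I_n}, forall i j : 'I_n, (i <= j)%N -> y (s j) <= y (s i).
Proof.
pose geY := fun a b : 'I_n => y b <= y a.
have geY_tr : transitive geY by move=> a b e h1 h2; exact: le_trans h2 h1.
have geY_total : total geY by move=> a b; exact: le_total.
have : perm_eq (sort geY (enum 'I_n)) (ord_tuple n).
  by rewrite val_ord_tuple perm_sort perm_refl.
case/tuple_permP => s Es; exists s => i j le_ij.
have sorted_s := sort_sorted geY_total (enum 'I_n).
have size_s : size (sort geY (enum 'I_n)) = n by rewrite size_sort size_enum_ord.
have nthE (k : 'I_n) : nth i (sort geY (enum 'I_n)) k = s k.
  by rewrite Es -(tnth_nth i) tnth_mktuple tnth_ord_tuple.
have [->|ne_ij] := eqVneq i j; first exact: lexx.
have lt_ij : (i < j)%N by rewrite ltn_neqAle ne_ij le_ij.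
have := sorted_ltn_nth geY_tr i sorted_s i j; rewrite !inE size_s !ltn_ord !nthE.
exact.
Qed.

Lemma perm_block_dichotomy (n M : nat) (s : {perm 'I_n}) :
  (forall k : 'I_n, (s k < M)%N = (k < M)%N) \/
  exists2 k0 : 'I_n, (k0 < M)%N & (M <= s k0)%N.
Proof.
case: (boolP [exists k : 'I_n, (k < M)%N && (M <= s k)%N]).
  by case/existsP => k /andP[kM skM]; right; exists k.
move/existsPn => stays; left.
pose S := [set k : 'I_n | (k < M)%N].
have sS : s @: S \subset S.
  apply/subsetP => _ /imsetP[k kS ->]; rewrite !inE in kS *.
  by move: (stays k); rewrite kS /= -ltnNge.
have sSE : s @: S = S.
  by apply/eqP; rewrite eqEcard sS /= card_imset //; exact: perm_inj.
move=> k; have := mem_imset S k (@perm_inj _ s).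
by rewrite sSE !inE.
Qed.

Lemma sum_perm (R : realFieldType) (n : nat) (s : {perm 'I_n}) (F : nat -> R) :
  \sum_(k < n) F (s k) = \sum_(k < n) F k.
Proof. by rewrite [RHS](reindex_inj (@perm_inj _ s)). Qed.

Lemma ler_pdiv_cross (F : realFieldType) (a b c d : F) :
  0 < b -> 0 < d -> a * d <= c * b -> a / b <= c / d.
Proof. by move=> b_gt0 d_gt0 h; rewrite ler_pdivrMr // mulrAC ler_pdivlMr. Qed.

(* One averaging step y' = A y of the dynamics: A is row stochastic, puts
   weight at least c on the diagonal, and is cut-balanced with constant K. *)
Record cut_balanced (R : realFieldType) (n : nat) (c K : R) (A : nat -> nat -> R) :
  Prop := CutBalanced {
  cb_ge0 : forall i j, (i < n)%N -> (j < n)%N -> 0 <= A i j;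
  cb_row : forall i, (i < n)%N -> \sum_(j < n) A i j = 1;
  cb_diag : forall i, (i < n)%N -> c <= A i i;
  cb_bal : forall i j, (i < n)%N -> (j < n)%N -> A i j <= K * A j i }.

(* Constraints on the geometric weight b of the Lyapunov function
   y |-> \sum_k b^k y_(k) (y sorted decreasingly) and on the gain d it
   guarantees at each step, for n'.+1 agents. *)
Record lyapunov_params (R : realFieldType) (n' : nat) (c K b d : R) : Prop :=
  LyapunovParams {
  lp_b_gt0 : 0 < b;
  lp_b_le1 : b <= 1;
  lp_bK : b * K <= 1 / 2;
  lp_nb : n'.+1%:R * b <= c / 2;
  lp_d_ge0 : 0 <= d;
  lp_dn : d * (1 + K) * n'.+1%:R <= b ^+ n' * c / 2;
  lp_dK : d * (1 + K) <= b ^+ n' / 2 }.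

Section CutEstimate.
Variables (R : realFieldType) (n' : nat) (c K b d : R) (A : nat -> nat -> R).
Local Notation n := n'.+1.
Hypotheses (HA : cut_balanced n c K A) (Hp : lyapunov_params n' c K b d).
Hypothesis K_ge0 : 0 <= K.

Let A_ge0 (i j : 'I_n) : 0 <= A i j := cb_ge0 HA (ltn_ord i) (ltn_ord j).

Let b_ge0 : 0 <= b. Proof. exact: ltW (lp_b_gt0 Hp). Qed.

Let c_ge0 : 0 <= c.
Proof.
have := lp_nb Hp; have := mulr_ge0 (ler0n R n) b_ge0; lra.
Qed.

Let b_pow_anti k l : (k <= l)%N -> b ^+ l <= b ^+ k.
Proof. by move=> le_kl; apply: ler_wiXn2l => //; exact: lp_b_le1 Hp. Qed.

Definition top_mass (M i : nat) : R := \sum_(j < n | (j < M)%N) A i j.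
Definition low_mass (M i : nat) : R := \sum_(j < n | (M <= j)%N) A i j.
Definition outflow (M : nat) : R := \sum_(i < n | (i < M)%N) low_mass M i.
Definition inflow (M : nat) : R := \sum_(i < n | (M <= i)%N) top_mass M i.

Lemma mass_split M (i : 'I_n) : top_mass M i + low_mass M i = 1.
Proof.
rewrite /top_mass /low_mass -(cb_row HA (ltn_ord i)) [RHS](bigID (fun j : 'I_n => (j < M)%N)) /=.
by congr (_ + _); apply: eq_bigl => j; rewrite -leqNgt.
Qed.

Lemma top_mass_ge0 M (i : 'I_n) : 0 <= top_mass M i.
Proof. by apply: sumr_ge0 => j _; exact: A_ge0. Qed.

Lemma low_mass_ge0 M (i : 'I_n) : 0 <= low_mass M i.
Proof. by apply: sumr_ge0 => j _; exact: A_ge0. Qed.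

Lemma top_mass_le1 M (i : 'I_n) : top_mass M i <= 1.
Proof. by have := mass_split M i; have := low_mass_ge0 M i; lra. Qed.

(* A low row keeps its diagonal weight, hence sends at most 1 - c upwards. *)
Lemma top_mass_low_row M (i : 'I_n) : (M <= i)%N -> top_mass M i <= 1 - c.
Proof.
move=> Mi; have := mass_split M i; have := cb_diag HA (ltn_ord i).
have : A i i <= low_mass M i by apply: (ler_term_sum (F := A i)) => // j _.
lra.
Qed.

Lemma outflow_ge0 M : 0 <= outflow M.
Proof. by apply: sumr_ge0 => i _; exact: low_mass_ge0. Qed.

Lemma inflow_ge0 M : 0 <= inflow M.
Proof. by apply: sumr_ge0 => i _; exact: top_mass_ge0. Qed.

Lemma inflow_le M : inflow M <= K * outflow M.
Proof.
rewrite /inflow /outflow /top_mass /low_mass mulr_sumr.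
apply: le_trans (_ : \sum_(i < n | (M <= i)%N) \sum_(j < n | (j < M)%N) K * A j i <= _).
  by apply: ler_sum => i _; apply: ler_sum => j _; have := cb_bal HA (ltn_ord i) (ltn_ord j).
by rewrite exchange_big /=; apply: ler_sum => j _; rewrite mulr_sumr.
Qed.

Lemma outflow_le_n M : outflow M <= n%:R.
Proof.
apply: sum_unit_interval_le => i _.
by have := mass_split M i; have := low_mass_ge0 M i; have := top_mass_ge0 M i; lra.
Qed.

Lemma low_mass_le_outflow M (i : 'I_n) : (i < M)%N -> low_mass M i <= outflow M.
Proof.
by move=> iM; apply: (ler_term_sum (F := low_mass M)) => // k _; exact: low_mass_ge0.
Qed.

Lemma top_mass_le_inflow M (i : 'I_n) : (M <= i)%N -> top_mass M i <= inflow M.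
Proof.
by move=> Mi; apply: (ler_term_sum (F := top_mass M)) => // k _; exact: top_mass_ge0.
Qed.

Lemma crossing_le_flow M (i : 'I_n) :
  `|top_mass M i - (if (i < M)%N then 1 else 0)| <= outflow M + inflow M.
Proof.
have := outflow_ge0 M; have := inflow_ge0 M.
have := top_mass_ge0 M i; have := low_mass_ge0 M i; have := mass_split M i.
case: ifP => iM.
- have := low_mass_le_outflow iM.
  by rewrite ler_norml => *; apply/andP; split; lra.
- move/negbT: iM; rewrite -leqNgt => /top_mass_le_inflow.
  by rewrite subr0 ler_norml => *; apply/andP; split; lra.
Qed.

(* If s maps the top block onto itself, the top rows lose at least
   e * outflow (e = b^(M-1)) of the potential and the low rows regain at most
   b^M * inflow <= e * outflow / 2; the rest pays for the gain term. *)
Lemma cut_stable M (s : {perm 'I_n}) : (0 < M)%N -> (M <= n')%N ->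
  (forall k : 'I_n, (s k < M)%N = (k < M)%N) ->
  \sum_(k < n) b ^+ k * top_mass M (s k) + d * (outflow M + inflow M)
  <= \sum_(k < n | (k < M)%N) b ^+ k.
Proof.
move=> M_gt0 M_le stable.
pose e := b ^+ M.-1.
have e_ge0 : 0 <= e by rewrite exprn_ge0.
have bMe : b ^+ M = b * e by rewrite /e -exprS prednK.
pose u (i : nat) := if (i < M)%N then 1 - top_mass M i else 0.
pose v (i : nat) := if (M <= i)%N then top_mass M i else 0.
have splitE : \sum_(k < n) b ^+ k * top_mass M (s k) =
    \sum_(k < n | (k < M)%N) b ^+ k - \sum_(k < n) b ^+ k * u (s k)
    + \sum_(k < n) b ^+ k * v (s k).
  rewrite [X in _ = X - _ + _]big_mkcond /= -sumrB -big_split /=.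
  by apply: eq_bigr => k _; rewrite /u /v (leqNgt M) stable; case: ifP => _ /=; lra.
have deficit : e * outflow M <= \sum_(k < n) b ^+ k * u (s k).
  have -> : outflow M = \sum_(k < n) u (s k).
    rewrite (sum_perm s u) /outflow big_mkcond /=; apply: eq_bigr => i _.
    by rewrite /u; case: ifP => // _; have := mass_split M i; lra.
  rewrite mulr_sumr; apply: ler_sum => k _.
  rewrite /u stable; case: ifP => kM; last by rewrite !mulr0.
  apply: ler_wpM2r; first by have := top_mass_le1 M (s k); lra.
  by apply: b_pow_anti; rewrite -ltnS prednK.
have surplus : \sum_(k < n) b ^+ k * v (s k) <= b * e * inflow M.
  have -> : inflow M = \sum_(k < n) v (s k).
    by rewrite (sum_perm s v) /inflow big_mkcond.
  rewrite -bMe mulr_sumr; apply: ler_sum => k _.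
  rewrite /v (leqNgt M) stable -leqNgt; case: ifP => kM; last by rewrite !mulr0.
  by apply: ler_wpM2r; [exact: top_mass_ge0 | exact: b_pow_anti].
have out_ge0 := outflow_ge0 M.
have gain_in : b * e * inflow M <= e * outflow M / 2.
  have : b * inflow M <= outflow M / 2.
    have := ler_wpM2l b_ge0 (inflow_le M).
    have := ler_wpM2r out_ge0 (lp_bK Hp); lra.
  by move/(ler_wpM2l e_ge0); lra.
have gain_d : d * (outflow M + inflow M) <= e * outflow M / 2.
  have := ler_wpM2l (lp_d_ge0 Hp) (inflow_le M).
  have := ler_wpM2r out_ge0 (lp_dK Hp).
  have := ler_wpM2r out_ge0 (b_pow_anti (leq_trans (leq_pred M) M_le)).
  rewrite -/e; lra.
rewrite splitE; lra.
Qed.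

(* If s moves some k0 < M into the low block, the low row s k0 keeps at least
   c of its weight at home; this loss c * b^k0 >= c * e pays both for the
   low part of the potential and for the gain term. *)
Lemma cut_mixing M (s : {perm 'I_n}) (k0 : 'I_n) : (0 < M)%N -> (M <= n')%N ->
  (k0 < M)%N -> (M <= s k0)%N ->
  \sum_(k < n) b ^+ k * top_mass M (s k) + d * (outflow M + inflow M)
  <= \sum_(k < n | (k < M)%N) b ^+ k.
Proof.
move=> M_gt0 M_le k0M Msk0.
pose e := b ^+ M.-1.
have e_ge0 : 0 <= e by rewrite exprn_ge0.
have bMe : b ^+ M = b * e by rewrite /e -exprS prednK.
have loss : \sum_(k < n) b ^+ k * top_mass M (s k) <= \sum_(k < n) b ^+ k - c * b ^+ k0.
  rewrite (bigD1 k0) //= [X in _ <= X - _](bigD1 k0) //=.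
  have : \sum_(k < n | k != k0) b ^+ k * top_mass M (s k) <= \sum_(k < n | k != k0) b ^+ k.
    apply: ler_sum => k _; rewrite -[X in _ <= X]mulr1.
    by apply: ler_wpM2l; [exact: exprn_ge0 | exact: top_mass_le1].
  have : b ^+ k0 * top_mass M (s k0) <= b ^+ k0 * (1 - c).
    by apply: ler_wpM2l; [exact: exprn_ge0 | exact: top_mass_low_row].
  lra.
have splitE : \sum_(k < n) b ^+ k =
    \sum_(k < n | (k < M)%N) b ^+ k + \sum_(k < n | (M <= k)%N) b ^+ k.
  rewrite (bigID (fun k : 'I_n => (k < M)%N)) /=; congr (_ + _).
  by apply: eq_bigl => k; rewrite -leqNgt.
have tail : \sum_(k < n | (M <= k)%N) b ^+ k <= n%:R * (b * e).
  rewrite -bMe; apply: le_trans (_ : \sum_(k < n | (M <= k)%N) b ^+ M <= _).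
    by apply: ler_sum => k; exact: b_pow_anti.
  have -> : \sum_(k < n | (M <= k)%N) b ^+ M = (\sum_(k < n | (M <= k)%N) (1 : R)) * b ^+ M.
    by rewrite mulr_suml; apply: eq_bigr => k _; rewrite mul1r.
  apply: ler_wpM2r; first exact: exprn_ge0.
  by apply: sum_unit_interval_le => k _; rewrite ler01 lexx.
have c_pay : c * e <= c * b ^+ k0.
  by apply: ler_wpM2l => //; apply: b_pow_anti; rewrite -ltnS prednK.
have tail_pay : n%:R * (b * e) <= c / 2 * e.
  by rewrite mulrA; exact: ler_wpM2r (lp_nb Hp).
have d_pay : d * (outflow M + inflow M) <= c / 2 * e.
  have dK_ge0 : 0 <= d * (1 + K) by rewrite mulr_ge0 ?addr_ge0 // (lp_d_ge0 Hp).
  have := ler_wpM2l (lp_d_ge0 Hp) (inflow_le M).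
  have := ler_wpM2l dK_ge0 (outflow_le_n M).
  have c2_ge0 : 0 <= c / 2 by have := c_ge0; lra.
  have := ler_wpM2r c2_ge0 (b_pow_anti (leq_trans (leq_pred M) M_le)).
  have := lp_dn Hp.
  rewrite -/e; lra.
lra.
Qed.

(* The cut estimate: for every threshold 0 < M < n and every permutation s,
   averaging the indicator of the top block cannot increase the potential, and
   it decreases by at least d times the flow across the cut. *)
Lemma cut_estimate M (s : {perm 'I_n}) : (0 < M)%N -> (M <= n')%N ->
  \sum_(k < n) b ^+ k * top_mass M (s k) + d * (outflow M + inflow M)
  <= \sum_(k < n | (k < M)%N) b ^+ k.
Proof.
move=> M_gt0 M_le.
have [stable|[k0 k0M Msk0]] := perm_block_dichotomy M s.
- exact: cut_stable.
- exact: cut_mixing Msk0.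
Qed.

Lemma move_le_flow (y : nat -> R) (i : nat) : (i < n)%N ->
  (forall k l, (k <= l)%N -> (l < n)%N -> y l <= y k) ->
  `|\sum_(j < n) A i j * y j - y i|
  <= \sum_(m < n') (y m - y m.+1) * (outflow m.+1 + inflow m.+1).
Proof.
move=> iN y_dec.
have yiE : y i = y n' + \sum_(m < n') (y m - y m.+1) *
    \sum_(j < m.+1) (if (j : nat) == i then 1 else 0).
  have := abel_summation (fun j : nat => if j == i then 1 else 0) y n'.
  by rewrite sum_delta_mul sum_delta iN mul1r.
rewrite (abel_summation (A i) y n') (cb_row HA iN) mul1r yiE.
rewrite opprD addrACA subrr add0r -sumrB.
apply: le_trans (ler_norm_sum _ _ _) _; apply: ler_sum => m _.
have gap_ge0 := sorted_gap_ge0 m y_dec.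
rewrite -mulrBr normrM ger0_norm //; apply: ler_wpM2l => //.
rewrite sum_delta (big_ord_widen n (A i)); last by rewrite ltnS ltnW.
exact: crossing_le_flow m.+1 (Ordinal iN).
Qed.

Lemma cut_cumulative (s : {perm 'I_n}) (m : 'I_n') :
  \sum_(j < m.+1) \sum_(k < n) b ^+ k * A (s k) j + d * (outflow m.+1 + inflow m.+1)
  <= \sum_(j < m.+1) b ^+ j.
Proof.
have m_le : (m.+1 <= n)%N by rewrite ltnS ltnW.
rewrite (big_ord_widen n (fun j => \sum_(k < n) b ^+ k * A (s k) j) m_le).
rewrite [X in _ <= X](big_ord_widen n _ m_le).
rewrite exchange_big /=; under eq_bigr do rewrite -mulr_sumr.
exact: cut_estimate.
Qed.

(* One averaging step decreases the potential of a sorted profile y by at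
   least d times the move of any agent: Abel summation turns both sides into
   sums over the gaps of y, compared threshold by threshold. *)
Lemma sorted_step (s : {perm 'I_n}) (y : nat -> R) (i : nat) : (i < n)%N ->
  (forall k l, (k <= l)%N -> (l < n)%N -> y l <= y k) ->
  \sum_(k < n) b ^+ k * (\sum_(j < n) A (s k) j * y j)
  + d * `|\sum_(j < n) A i j * y j - y i| <= \sum_(k < n) b ^+ k * y k.
Proof.
move=> iN y_dec.
pose col j := \sum_(k < n) b ^+ k * A (s k) j.
have colE : \sum_(k < n) b ^+ k * (\sum_(j < n) A (s k) j * y j)
    = \sum_(j < n) col j * y j.
  under eq_bigr do rewrite mulr_sumr.
  rewrite exchange_big /=; apply: eq_bigr => j _; rewrite mulr_suml.
  by apply: eq_bigr => k _; rewrite mulrA.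
have col_total : \sum_(j < n) col j = \sum_(k < n) b ^+ k.
  rewrite /col exchange_big /=; apply: eq_bigr => k _.
  by rewrite -mulr_sumr (cb_row HA (ltn_ord _)) mulr1.
rewrite colE (abel_summation col y n') (abel_summation (fun k => b ^+ k) y n') col_total.
have : d * \sum_(m < n') (y m - y m.+1) * (outflow m.+1 + inflow m.+1)
    <= \sum_(m < n') (y m - y m.+1) * \sum_(j < m.+1) b ^+ j
       - \sum_(m < n') (y m - y m.+1) * \sum_(j < m.+1) col j.
  rewrite -sumrB mulr_sumr; apply: ler_sum => m _.
  rewrite -mulrBr mulrCA; apply: ler_wpM2l; first exact: sorted_gap_ge0.
  by have := cut_cumulative s m; lra.
have := ler_wpM2l (lp_d_ge0 Hp) (move_le_flow iN y_dec).
lra.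
Qed.
End CutEstimate.

(* The potential decrease for an arbitrary profile y: tau lists y in
   non-increasing order and sig is any permutation (in use, the one sorting
   the averaged profile).  Relabelling the agents by tau reduces this to
   sorted_step. *)
Lemma lyapunov_step (R : realFieldType) (n' : nat) (c K b d : R)
    (A : nat -> nat -> R) (tau sig : {perm 'I_n'.+1}) (y : nat -> R) (i : nat) :
  cut_balanced n'.+1 c K A -> lyapunov_params n' c K b d -> 0 <= K ->
  (i < n'.+1)%N ->
  (forall k l : 'I_n'.+1, (k <= l)%N -> y (tau l) <= y (tau k)) ->
  \sum_(k < n'.+1) b ^+ k * (\sum_(j < n'.+1) A (sig k) j * y j)
  + d * `|\sum_(j < n'.+1) A i j * y j - y i|
  <= \sum_(k < n'.+1) b ^+ k * y (tau k).
Proof.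
move=> HA Hp K_ge0 iN y_sorted.
pose t k : nat := tau (inord k).
have tE (k : 'I_n'.+1) : t k = tau k by rewrite /t inord_val.
have t_lt k : (t k < n'.+1)%N := ltn_ord (tau (inord k)).
have relabel (F : nat -> R) : \sum_(j < n'.+1) F (t j) = \sum_(j < n'.+1) F j.
  by rewrite -(sum_perm tau); apply: eq_bigr => j _; rewrite tE.
pose B k l := A (t k) (t l).
have HB : cut_balanced n'.+1 c K B.
  split=> [k l _ _ | k _ | k _ | k l _ _]; rewrite /B.
  - exact: (cb_ge0 HA (t_lt k) (t_lt l)).
  - by rewrite (relabel (A (t k))) (cb_row HA (t_lt k)).
  - exact: (cb_diag HA (t_lt k)).
  - exact: (cb_bal HA (t_lt k) (t_lt l)).
have y_dec k l : (k <= l)%N -> (l < n'.+1)%N -> y (t l) <= y (t k).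
  by move=> kl ln; apply: y_sorted; rewrite !inordK // (leq_ltn_trans kl ln).
pose i' := (tau^-1)%g (Ordinal iN).
have := sorted_step HB Hp K_ge0 (sig * tau^-1)%g (ltn_ord i') y_dec.
have rowE (k : nat) : \sum_(j < n'.+1) B k j * y (t j) = \sum_(j < n'.+1) A (t k) j * y j.
  exact: (relabel (fun j => A (t k) j * y j)).
rewrite rowE tE permKV.
under eq_bigr do rewrite rowE tE permM permKV.
by under [X in _ <= X -> _]eq_bigr do rewrite tE.
Qed.

Lemma lyapunov_params_exist (R : realFieldType) (n' : nat) (c K : R) :
  0 < c -> c <= 1 -> 1 <= K -> exists b d, 0 < d /\ lyapunov_params n' c K b d.
Proof.
move=> c_gt0 c_le1 K_ge1.
set N : R := n'.+1%:R.
have N_ge1 : 1 <= N by rewrite /N ler1n.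
have NK_gt0 : 0 < 2 * N * K by rewrite !mulr_gt0 //; lra.
pose b := c / (2 * N * K).
have bE : b * (2 * N * K) = c by rewrite /b divfK // gt_eqF.
have b_gt0 : 0 < b by apply: divr_gt0.
have bn_gt0 : 0 < b ^+ n' by apply: exprn_gt0.
have NK1_gt0 : 0 < 2 * N * (1 + K) by rewrite !mulr_gt0 //; lra.
pose d := b ^+ n' * c / (2 * N * (1 + K)).
have dE : d * (2 * N * (1 + K)) = b ^+ n' * c by rewrite /d divfK // gt_eqF.
have d_gt0 : 0 < d by rewrite /d !mulr_gt0 // invr_gt0.
(* The constraints follow linearly from the signs of these products. *)
have hN : 0 <= N - 1 by lra.
have hK : 0 <= K - 1 by lra.
have hK0 : 0 <= K by lra.
have hc : 0 <= 1 - c by lra.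
have := mulr_ge0 (mulr_ge0 (ltW b_gt0) hK0) hN.
have := mulr_ge0 (mulr_ge0 (ltW b_gt0) hN) hK.
have := mulr_ge0 (ltW b_gt0) hK.
have := mulr_ge0 (ltW bn_gt0) hc.
have := mulr_ge0 (mulr_ge0 (ltW d_gt0) hK0) hN.
have := mulr_ge0 (ltW d_gt0) hN.
move=> *; exists b, d; split=> //; split; lra.
Qed.

Definition sort_perm (R : realFieldType) (n : nat) (y : nat -> R) : {perm 'I_n} :=
  odflt 1%g [pick s : {perm 'I_n} |
    [forall k : 'I_n, forall l : 'I_n, (k <= l)%N ==> (y (s l) <= y (s k))]].

Lemma sort_permP (R : realFieldType) (n : nat) (y : nat -> R) (k l : 'I_n) :
  (k <= l)%N -> y (sort_perm n y l) <= y (sort_perm n y k).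
Proof.
rewrite /sort_perm; case: pickP => [s /forallP s_sorted | unsorted] /=.
  by move: (s_sorted k) => /forallP /(_ l) /implyP.
have [s s_sorted] := exists_sorting_perm n y.
suff : false by [].
rewrite -(unsorted s); apply/forallP => k'; apply/forallP => l'; apply/implyP.
exact: s_sorted.
Qed.

Lemma averaging_lower_bound (R : realFieldType) (n : nat) (lo : R)
    (A : nat -> nat -> nat -> R) (Y : nat -> nat -> R) :
  (forall t i j, (i < n)%N -> (j < n)%N -> 0 <= A t i j) ->
  (forall t i, (i < n)%N -> \sum_(j < n) A t i j = 1) ->
  (forall t i, (i < n)%N -> Y t.+1 i = \sum_(j < n) A t i j * Y t j) ->
  (forall j, (j < n)%N -> lo <= Y 0%N j) ->
  forall t j, (j < n)%N -> lo <= Y t j.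
Proof.
move=> A_ge0 A_row HY lo_le; elim=> [|t IH] j jn; first exact: lo_le.
rewrite HY // -[X in X <= _]mul1r -(A_row t j jn) mulr_suml.
by apply: ler_sum => k _; apply: ler_wpM2l; [exact: A_ge0 | exact: IH].
Qed.

(* The potential Phi t = \sum_k b^k y_(k)(t) of the
   sorted profile is bounded below and drops by d * |y_i(t+1) - y_i(t)| at
   each step, so the moves sum to at most (Phi 0 - inf Phi) / d. *)
Theorem cut_balanced_bounded_variation (R : realFieldType) (n' : nat) (c K : R)
    (A : nat -> nat -> nat -> R) (Y : nat -> nat -> R) :
  0 < c -> c <= 1 -> 1 <= K ->
  (forall t, cut_balanced n'.+1 c K (A t)) ->
  (forall t i, (i < n'.+1)%N -> Y t.+1 i = \sum_(j < n'.+1) A t i j * Y t j) ->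
  exists B : R, forall i, (i < n'.+1)%N ->
    forall T, \sum_(t < T) `|Y t.+1 i - Y t i| <= B.
Proof.
move=> c_gt0 c_le1 K_ge1 HA HY.
have K_ge0 : 0 <= K by lra.
have [b [d [d_gt0 Hp]]] := lyapunov_params_exist n' c_gt0 c_le1 K_ge1.
pose tau t := sort_perm n'.+1 (Y t).
pose Phi t := \sum_(k < n'.+1) b ^+ k * Y t (tau t k).
have Phi_step t i : (i < n'.+1)%N -> Phi t.+1 + d * `|Y t.+1 i - Y t i| <= Phi t.
  move=> iN; have := lyapunov_step (tau t.+1) (HA t) Hp K_ge0 iN (@sort_permP _ _ (Y t)).
  rewrite -HY //; congr (_ + _ <= _); apply: eq_bigr => k _.
  by rewrite HY //; exact: ltn_ord.
pose lo := - \sum_(j < n'.+1) `|Y 0%N j|.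
have lo_le : forall t j, (j < n'.+1)%N -> lo <= Y t j.
  apply: (averaging_lower_bound (A := A) _ _ HY).
  - by move=> s; exact: cb_ge0.
  - by move=> s; exact: cb_row.
  - move=> j jN; apply: lerNnormlW.
    by apply: (ler_term_sum_nat (F := fun k => `|Y 0%N k|)) => // k _.
have Phi_ge t : lo * \sum_(k < n'.+1) b ^+ k <= Phi t.
  rewrite mulr_sumr; apply: ler_sum => k _; rewrite mulrC.
  by apply: ler_wpM2l; [rewrite exprn_ge0 // ltW // (lp_b_gt0 Hp) | exact: lo_le].
exists ((Phi 0%N - lo * \sum_(k < n'.+1) b ^+ k) / d) => i iN T.
rewrite ler_pdivlMr //.
have telescope : (\sum_(t < T) `|Y t.+1 i - Y t i|) * d <= Phi 0%N - Phi T.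
  elim: T => [|T IH]; first by rewrite big_ord0 mul0r subrr.
  by rewrite big_ord_recr /= mulrDl; have := Phi_step T i iN; lra.
by have := Phi_ge T; lra.
Qed.

Lemma sumN_big (n : nat) (g : nat -> R) : sumN n g = \sum_(j < n) g j.
Proof.
elim: n => [|n IH] /=; first by rewrite big_ord0.
by rewrite big_ord_recr /= IH.
Qed.

Section BlurringWeights.
Variables (N' : nat) (f : vec -> R) (w : nat -> R) (lo : R).
Local Notation N := N'.+1.
Local Notation W := (\sum_(j < N) w j).
Hypotheses (f_ge0 : forall u, 0 <= f u) (f_le1 : forall u, f u <= 1).
Hypotheses (f_self : forall a, f (vsub a a) = 1).
Hypothesis f_sym : forall a b, f (vsub a b) = f (vsub b a).
Hypotheses (lo_gt0 : 0 < lo) (w_lo : forall i, (i < N)%N -> lo <= w i).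

Definition bms_denom (X : nat -> vec) (i : nat) :=
  \sum_(j < N) f (vsub (X i) (X j)) * w j.
Definition bms_coef (X : nat -> vec) (i j : nat) :=
  f (vsub (X i) (X j)) * w j / bms_denom X i.

Lemma bms_step_avg (X : nat -> vec) (i k : nat) :
  bms_step N f w X i k = \sum_(j < N) bms_coef X i j * X j k.
Proof.
have -> : bms_step N f w X i k =
    (\sum_(j < N) f (vsub (X i) (X j)) * w j * X j k) / bms_denom X i.
  by rewrite /bms_step !sumN_big.
by rewrite mulr_suml; apply: eq_bigr => j _; rewrite mulrAC.
Qed.

Let w_gt0 i : (i < N)%N -> 0 < w i.
Proof. by move=> iN; exact: lt_le_trans lo_gt0 (w_lo iN). Qed.

Let w_le_total i : (i < N)%N -> w i <= W.
Proof. by move=> iN; apply: ler_term_sum_nat => // j jN; exact/ltW/w_gt0. Qed.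

Let lo_le_total : lo <= W.
Proof. exact: le_trans (w_lo (ltn0Sn N')) (w_le_total (ltn0Sn N')). Qed.

Let total_gt0 : 0 < W.
Proof. exact: lt_le_trans lo_gt0 lo_le_total. Qed.

(* The own term f(0) w_i = w_i bounds the denominator below; f <= 1 bounds it
   above by the total weight. *)
Lemma bms_denom_ge (X : nat -> vec) (i : nat) : (i < N)%N -> w i <= bms_denom X i.
Proof.
move=> iN; rewrite -[w i]mul1r -(f_self (X i)).
apply: (ler_term_sum_nat (F := fun j => f (vsub (X i) (X j)) * w j)) => // j jN.
by rewrite mulr_ge0 // ltW // w_gt0.
Qed.

Lemma bms_denom_le (X : nat -> vec) (i : nat) : bms_denom X i <= W.
Proof.
apply: ler_sum => j _; rewrite -[X in _ <= X]mul1r.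
by apply: ler_wpM2r => //; exact/ltW/w_gt0.
Qed.

Lemma bms_constants :
  [/\ 0 < lo / W, lo / W <= 1 & 1 <= W * W / (lo * lo)].
Proof.
split; first by rewrite divr_gt0.
- by rewrite ler_pdivrMr ?mul1r.
- by rewrite ler_pdivlMr ?mulr_gt0 // mul1r; apply: ler_pM => //; exact: ltW.
Qed.

Lemma bms_coef_cut_balanced (X : nat -> vec) :
  cut_balanced N (lo / W) (W * W / (lo * lo)) (bms_coef X).
Proof.
have denom_gt0 i : (i < N)%N -> 0 < bms_denom X i.
  by move=> iN; exact: lt_le_trans (w_gt0 iN) (bms_denom_ge X iN).
split=> [i j iN jN | i iN | i iN | i j iN jN]; rewrite /bms_coef.
- by rewrite divr_ge0 ?mulr_ge0 // ltW // ?w_gt0 ?denom_gt0.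
- by rewrite -mulr_suml divff // gt_eqF // denom_gt0.
- rewrite f_self mul1r; apply: ler_pdiv_cross => //; first exact: denom_gt0.
  by apply: ler_pM; rewrite ?(ltW lo_gt0) ?(ltW (denom_gt0 _ iN)) ?w_lo ?bms_denom_le.
- rewrite (f_sym (X j)); set phi := f (vsub (X i) (X j)).
  have phi_ge0 : 0 <= phi by exact: f_ge0.
  have upper : phi * w j / bms_denom X i <= phi * W / lo.
    apply: ler_pdiv_cross => //; first exact: denom_gt0.
    apply: ler_pM; rewrite ?mulr_ge0 ?(ltW lo_gt0) ?ler_wpM2l ?w_le_total //.
    - exact/ltW/w_gt0.
    - exact: le_trans (w_lo iN) (bms_denom_ge X iN).
  have lower : phi * lo / W <= phi * w i / bms_denom X j.
    apply: ler_pdiv_cross => //; first exact: denom_gt0.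
    apply: ler_pM; rewrite ?mulr_ge0 ?(ltW lo_gt0) ?ler_wpM2l ?w_lo ?bms_denom_le //.
    exact/ltW/denom_gt0.
  have scaleE : W * W / (lo * lo) * (phi * lo / W) = phi * W / lo.
    by field; rewrite !gt_eqF.
  apply: le_trans upper _; rewrite -scaleE; apply: ler_wpM2l => //.
  by rewrite divr_ge0 ?mulr_ge0 // ltW.
Qed.
End BlurringWeights.

Lemma bms_coord_cv (p N : nat) (x : nat -> vec) (w : nat -> R) (f : vec -> R)
    (i k : nat) :
  (1 <= N)%coq_nat -> (forall j, (j < N)%coq_nat -> Rlt 0 (w j)) -> PDD p f ->
  (i < N)%coq_nat -> exists l, Un_cv (fun t => bms N f w x t i k) l.
Proof.
case: N => [/ssrnat.leP //|N'] _ w_pos f_PDD /ssrnat.ltP iN.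
have [lo [/RltP lo_gt0 w_lo]] := pos_lower_bound _ _ w_pos.
have {}w_lo j : (j < N'.+1)%N -> lo <= w j by move=> /ssrnat.ltP /w_lo /RleP.
have [f01 _] := f_PDD.
have f_ge0 u : 0 <= f u by apply/RleP; case: (f01 u).
have f_le1 u : f u <= 1 by apply/RleP; case: (f01 u).
have [c_gt0 c_le1 K_ge1] := bms_constants lo_gt0 w_lo.
pose X := bms N'.+1 f w x.
have HA t := bms_coef_cut_balanced f_ge0 f_le1 (PDD_self _ _ f_PDD) (PDD_sym _ _ f_PDD) lo_gt0 w_lo (X t).
pose Y t j := X t j k.
have HY t j : (j < N'.+1)%N ->
    Y t.+1 j = \sum_(l < N'.+1) bms_coef N' f w (X t) j l * Y t l.
  by move=> _; exact: bms_step_avg.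
have [B HB] := cut_balanced_bounded_variation c_gt0 c_le1 K_ge1 HA HY.
apply: (cv_of_bounded_variation _ B) => T.
by rewrite sumN_big; apply/RleP; exact: HB.
Qed.

Unset Implicit Arguments.
Open Scope R_scope.

Theorem theorem1 (p N : nat) (x : nat -> vec) (w : nat -> R) (f : vec -> R) :
  (1 <= p)%coq_nat -> (1 <= N)%coq_nat ->
  (forall i, (i < N)%coq_nat -> 0 < w i) ->
  PDD p f ->
  exists xstar : nat -> vec,
    forall i, (i < N)%coq_nat ->
      forall eps, 0 < eps ->
        exists T : nat, forall t, (T <= t)%coq_nat ->
          norm p (vsub (bms N f w x t i) (xstar i)) < eps.
Proof.
move=> _ N_ge1 w_pos f_PDD.
have [xstar xstarP] := choose_limits N (bms N f w x)
  (fun i k iN => bms_coord_cv x k N_ge1 w_pos f_PDD iN).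
exists xstar => i iN.
by apply: norm_cv_of_coord_cv => k _; exact: xstarP.
Qed.
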